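(* Let $B>0$. Suppose $y(t,x)$ is a solution of $y_{t}+By_{xxxx}=0$ for $x>0$ (or for $x<0$) and $t>0$ which has the self-similar form $y(t,x)=(Bt)^{1/4}Z\big(x/(Bt)^{1/4}\big)$ for some function $Z$. Then there are constants $C_1,C_2,C_3,C_4\in\mathbb{R}$ such that $$y(t,x)=(Bt)^{1/4}\sum_{i=1}^{4}C_{i}\,z_{i}\!\left(\frac{x}{(Bt)^{1/4}}\right),\qquad x>0\ (\text{or } x<0),\ t>0,$$ where $z_{1}(u)={}_{1}F_{3}(-\tfrac{1}{4};\tfrac{1}{4},\tfrac{1}{2},\tfrac{3}{4};\tfrac{u^{4}}{256})$, $z_{2}(u)=u$, $z_{3}(u)=u^{2}\,{}_{1}F_{3}(\tfrac{1}{4};\tfrac{3}{4},\tfrac{5}{4},\tfrac{3}{2};\tfrac{u^{4}}{256})$, $z_{4}(u)=u^{3}\,{}_{1}F_{3}(\tfrac{1}{2};\tfrac{5}{4},\tfrac{3}{2},\tfrac{7}{4};\tfrac{u^{4}}{256})$.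
   Context: ${}_{p}F_{q}(a_{1},\ldots,a_{p};b_{1},\ldots,b_{q};\nu)=\sum_{k\ge0}\frac{(a_{1})_{k}\cdots(a_{p})_{k}}{(b_{1})_{k}\cdots(b_{q})_{k}}\frac{\nu^{k}}{k!}$ is the generalized hypergeometric function, with Pochhammer symbol $(\lambda)_{k}=\lambda(\lambda+1)\cdots(\lambda+k-1)$, $(\lambda)_0=1$. $B$ is a positive constant (the Mullins coefficient). *)

From Stdlib Require Import Reals List.
From Coquelicot Require Import Coquelicot.
Import ListNotations.
Open Scope R_scope.

Fixpoint pochhammer (a : R) (k : nat) : R :=
  match k with
  | O => 1
  | S k' => pochhammer a k' * (a + INR k')
  end.

Definition hyper_term (as_ bs : list R) (v : R) (k : nat) : R :=
  fold_right Rmult 1 (map (fun a => pochhammer a k) as_)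
  / fold_right Rmult 1 (map (fun b => pochhammer b k) bs)
  * v ^ k / INR (Stdlib.Arith.Factorial.fact k).

Definition hypergeom (as_ bs : list R) (v : R) : R :=
  Series (hyper_term as_ bs v).

Definition z1 (u : R) : R :=
  hypergeom [-(1/4)] [1/4; 1/2; 3/4] (u ^ 4 / 256).
Definition z2 (u : R) : R := u.
Definition z3 (u : R) : R :=
  u ^ 2 * hypergeom [1/4] [3/4; 5/4; 3/2] (u ^ 4 / 256).
Definition z4 (u : R) : R :=
  u ^ 3 * hypergeom [1/2] [5/4; 3/2; 7/4] (u ^ 4 / 256).

Definition halfline (pos : bool) (x : R) : Prop :=
  if pos then 0 < x else x < 0.

Definition is_solution (B : R) (pos : bool) (y : R -> R -> R) : Prop :=
  forall t x, 0 < t -> halfline pos x ->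
    ex_derive (fun s => y s x) t /\
    (forall k, (k < 4)%nat -> ex_derive (Derive_n (fun z => y t z) k) x) /\
    Derive (fun s => y s x) t + B * Derive_n (fun z => y t z) 4 x = 0.

(* At time [t = 1/B] the scale [(B t)^(1/4)] is [1], so [Z = y(1/B, .)] on the
   half-line and the PDE becomes the profile equation [4 Z'''' = u Z' - Z].  Its
   power-series solutions have coefficients with
   [(n+1)(n+2)(n+3)(n+4) c_(n+4) = (n-1)/4 c_n], which forces an infinite radius of
   convergence; [z1], [z3], [z4] are such series (hypergeometric in [u^4/256]) and
   [z2 = u] is a solution too.  As the equation has no [Z'''] term, the Wronskian of
   any four solutions is constant, and that of [z1, ..., z4] is [12].  By Cramer's
   rule, in which each Wronskian containing [Z] is constant on the (connected)
   half-line, [Z] is a fixed combination of [z1, ..., z4]. *)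

From Stdlib Require Import Reals List Lra Lia.
From Coquelicot Require Import Coquelicot.
Import ListNotations.
Open Scope R_scope.

Definition det3 a b c d e f g h i : R :=
  a * (e * i - f * h) - b * (d * i - f * g) + c * (d * h - e * g).

Definition det4 a0 a1 a2 a3 b0 b1 b2 b3 c0 c1 c2 c3 d0 d1 d2 d3 : R :=
  a0 * det3 b1 b2 b3 c1 c2 c3 d1 d2 d3 - a1 * det3 b0 b2 b3 c0 c2 c3 d0 d2 d3
  + a2 * det3 b0 b1 b3 c0 c1 c3 d0 d1 d3 - a3 * det3 b0 b1 b2 c0 c1 c2 d0 d1 d2.

Definition jet_solves (a0 a1 a2 : R -> R) (D : R -> Prop) (J : nat -> R -> R) : Prop :=
  forall x, D x ->
    is_derive (J 0%nat) x (J 1%nat x) /\ is_derive (J 1%nat) x (J 2%nat x) /\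
    is_derive (J 2%nat) x (J 3%nat x) /\
    is_derive (J 3%nat) x (a0 x * J 0%nat x + a1 x * J 1%nat x + a2 x * J 2%nat x).

Definition wronskian (J1 J2 J3 J4 : nat -> R -> R) (x : R) : R :=
  det4 (J1 0%nat x) (J2 0%nat x) (J3 0%nat x) (J4 0%nat x)
       (J1 1%nat x) (J2 1%nat x) (J3 1%nat x) (J4 1%nat x)
       (J1 2%nat x) (J2 2%nat x) (J3 2%nat x) (J4 2%nat x)
       (J1 3%nat x) (J2 3%nat x) (J3 3%nat x) (J4 3%nat x).

Lemma wronskian_cramer (J K1 K2 K3 K4 : nat -> R -> R) x :
  J 0%nat x * wronskian K1 K2 K3 K4 x =
    wronskian J K2 K3 K4 x * K1 0%nat x + wronskian K1 J K3 K4 x * K2 0%nat x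
  + wronskian K1 K2 J K4 x * K3 0%nat x + wronskian K1 K2 K3 J x * K4 0%nat x.
Proof. unfold wronskian, det4, det3. ring. Qed.

Section Wronskian.

Variables (a0 a1 a2 : R -> R) (D : R -> Prop).

(* Liouville: [W' = tr(A) W] for the companion matrix [A], whose trace is the
   coefficient of [y'''], here zero. *)
Lemma is_derive_wronskian J1 J2 J3 J4 x :
  jet_solves a0 a1 a2 D J1 -> jet_solves a0 a1 a2 D J2 ->
  jet_solves a0 a1 a2 D J3 -> jet_solves a0 a1 a2 D J4 ->
  D x -> is_derive (wronskian J1 J2 J3 J4) x 0.
Proof.
  intros H1 H2 H3 H4 Dx.
  destruct (H1 x Dx) as (d10 & d11 & d12 & d13).
  destruct (H2 x Dx) as (d20 & d21 & d22 & d23).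
  destruct (H3 x Dx) as (d30 & d31 & d32 & d33).
  destruct (H4 x Dx) as (d40 & d41 & d42 & d43).
  unfold wronskian, det4, det3.
  auto_derive.
  - repeat split; eexists; eassumption.
  - (* [auto_derive] leaves the derivatives as eta-expanded [Derive]s. *)
    repeat match goal with
    | H : is_derive ?f x ?l |- _ =>
        rewrite (is_derive_unique _ x l H : Derive (fun y : R => f y) x = l); clear H
    end.
    ring.
Qed.

Lemma wronskian_const J1 J2 J3 J4 a b :
  jet_solves a0 a1 a2 D J1 -> jet_solves a0 a1 a2 D J2 ->
  jet_solves a0 a1 a2 D J3 -> jet_solves a0 a1 a2 D J4 ->
  (forall x, Rmin a b <= x <= Rmax a b -> D x) ->
  wronskian J1 J2 J3 J4 b = wronskian J1 J2 J3 J4 a.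
Proof.
  intros H1 H2 H3 H4 HD.
  destruct (MVT_gen (wronskian J1 J2 J3 J4) a b (fun _ => 0)) as (c & _ & Hc).
  - intros x Hx. apply is_derive_wronskian; auto. apply HD; lra.
  - intros x Hx. apply continuity_pt_filterlim, (ex_derive_continuous (wronskian J1 J2 J3 J4)).
    eexists. apply is_derive_wronskian; auto.
  - lra.
Qed.

Lemma jet_solves_span J J1 J2 J3 J4 u0 :
  (forall a b x, D a -> D b -> Rmin a b <= x <= Rmax a b -> D x) ->
  D u0 -> wronskian J1 J2 J3 J4 u0 <> 0 ->
  jet_solves a0 a1 a2 D J ->
  jet_solves a0 a1 a2 D J1 -> jet_solves a0 a1 a2 D J2 ->
  jet_solves a0 a1 a2 D J3 -> jet_solves a0 a1 a2 D J4 ->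
  exists C1 C2 C3 C4, forall u, D u ->
    J 0%nat u = C1 * J1 0%nat u + C2 * J2 0%nat u + C3 * J3 0%nat u + C4 * J4 0%nat u.
Proof.
  intros Hconv Hu0 HW H H1 H2 H3 H4.
  set (W := wronskian J1 J2 J3 J4 u0) in *.
  exists (wronskian J J2 J3 J4 u0 / W), (wronskian J1 J J3 J4 u0 / W),
    (wronskian J1 J2 J J4 u0 / W), (wronskian J1 J2 J3 J u0 / W).
  intros u Hu.
  assert (Hseg : forall x, Rmin u0 u <= x <= Rmax u0 u -> D x) by eauto.
  pose proof (wronskian_cramer J J1 J2 J3 J4 u) as Hcr.
  rewrite !(wronskian_const _ _ _ _ u0 u) in Hcr by assumption.
  fold W in Hcr.
  apply (Rmult_eq_reg_r W); [rewrite Hcr; field|]; exact HW.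
Qed.

End Wronskian.

Definition profile_jet : (R -> Prop) -> (nat -> R -> R) -> Prop :=
  jet_solves (fun _ => - (1 / 4)) (fun u => u / 4) (fun _ => 0).

Lemma profile_jet_intro D (J : nat -> R -> R) :
  (forall k x, (k < 4)%nat -> D x -> is_derive (J k) x (J (S k) x)) ->
  (forall x, D x -> J 4%nat x = (x * J 1%nat x - J 0%nat x) / 4) ->
  profile_jet D J.
Proof.
  intros Hd Hode x Dx.
  assert (Hd' : forall k, (k < 4)%nat -> is_derive (J k) x (J (S k) x))
    by (intros k Hk; exact (Hd k x Hk Dx)).
  split; [apply Hd'; lia |]. split; [apply Hd'; lia |]. split; [apply Hd'; lia |].
  replace (- (1 / 4) * J 0%nat x + x / 4 * J 1%nat x + 0 * J 2%nat x) with (J 4%nat x)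
    by (rewrite Hode by exact Dx; field).
  apply Hd'; lia.
Qed.

(* The coefficient recurrence of power-series solutions of [4 Z'''' = u Z' - Z]. *)
Definition profile_rec (c : nat -> R) : Prop := forall n,
  INR (S n) * INR (S (S n)) * INR (S (S (S n))) * INR (S (S (S (S n))))
    * c (S (S (S (S n)))) = (INR n - 1) / 4 * c n.

Lemma le_sum_f_R0 (f : nat -> R) N k :
  (forall i, 0 <= f i) -> (k <= N)%nat -> f k <= sum_f_R0 f N.
Proof.
  intros Hf. induction N as [|N IH]; intros Hk.
  - replace k with 0%nat by lia. simpl. lra.
  - simpl. destruct (Nat.eq_dec k (S N)) as [-> | Hne].
    + pose proof (cond_pos_sum f N Hf). lra.
    + specialize (IH ltac:(lia)). specialize (Hf (S N)). lra.
Qed.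

Lemma bounded_of_step4_nonincreasing (f : nat -> R) N :
  (forall i, 0 <= f i) -> (forall m, (N <= m)%nat -> f (4 + m)%nat <= f m) ->
  forall n, f n <= sum_f_R0 f (N + 3).
Proof.
  intros Hf Hstep n. induction n as [n IH] using (well_founded_induction Wf_nat.lt_wf).
  destruct (Nat.le_gt_cases n (N + 3)) as [Hle | Hgt].
  - apply le_sum_f_R0; assumption.
  - replace n with (4 + (n - 4))%nat by lia.
    eapply Rle_trans; [apply Hstep; lia | apply IH; lia].
Qed.

Lemma profile_rec_step c r m : profile_rec c -> r ^ 4 <= INR m ->
  Rabs (c (4 + m)%nat * r ^ (4 + m)) <= Rabs (c m * r ^ m).
Proof.
  intros Hc Hr. specialize (Hc m).
  set (P := INR (S m) * INR (S (S m)) * INR (S (S (S m))) * INR (S (S (S (S m))))) in Hc.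
  assert (Hm := pos_INR m).
  assert (HP : (INR m + 1) * (INR m + 1) <= P).
  { unfold P. rewrite !S_INR. nra. }
  assert (Hr4 : 0 <= r ^ 4) by (replace (r ^ 4) with ((r * r) * (r * r)) by ring; nra).
  set (q := (INR m - 1) * r ^ 4 / (4 * P)).
  assert (Hq : q * (4 * P) = (INR m - 1) * r ^ 4) by (unfold q; field; nra).
  replace (c (4 + m)%nat * r ^ (4 + m)) with (q * (c m * r ^ m)).
  2: { apply (Rmult_eq_reg_l P); [| nra].
       rewrite pow_add. change (4 + m)%nat with (S (S (S (S m)))).
       transitivity (P * c (S (S (S (S m)))) * r ^ 4 * r ^ m); [| ring].
       rewrite Hc. unfold q. field. nra. }
  rewrite Rabs_mult. rewrite <- (Rmult_1_l (Rabs (c m * r ^ m))) at 2.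
  apply Rmult_le_compat_r; [apply Rabs_pos |].
  apply Rabs_le. split; nra.
Qed.

Lemma profile_rec_CV_radius c : profile_rec c -> CV_radius c = p_infty.
Proof.
  intros Hc.
  assert (Hbnd : forall r, exists M, forall n, Rabs (c n * r ^ n) <= M).
  { intros r. destruct (INR_unbounded (r ^ 4)) as [N HN].
    exists (sum_f_R0 (fun k => Rabs (c k * r ^ k)) (N + 3)).
    apply bounded_of_step4_nonincreasing; [intros; apply Rabs_pos |].
    intros m Hm. apply profile_rec_step; [exact Hc |].
    apply le_INR in Hm. lra. }
  destruct (CV_radius_bounded c) as [Hub _].
  destruct (CV_radius c) as [l | |].
  - specialize (Hub (Rabs l + 1) (Hbnd _)). simpl in Hub.
    pose proof (Rle_abs l). lra.
  - reflexivity.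
  - destruct (Hub 0 (Hbnd 0)).
Qed.

Definition pseries_jet (c : nat -> R) (k : nat) : R -> R :=
  PSeries (Nat.iter k PS_derive c).

Lemma CV_radius_iter_PS_derive c k : CV_radius (Nat.iter k PS_derive c) = CV_radius c.
Proof.
  induction k as [|k IH]; [reflexivity |].
  simpl. rewrite CV_radius_derive. exact IH.
Qed.

Lemma pseries_jet_at_0 c :
  pseries_jet c 0 0 = c 0%nat /\ pseries_jet c 1 0 = c 1%nat /\
  pseries_jet c 2 0 = 2 * c 2%nat /\ pseries_jet c 3 0 = 6 * c 3%nat.
Proof.
  unfold pseries_jet. rewrite !PSeries_0. cbn [Nat.iter]. unfold PS_derive.
  cbn [INR]. repeat split; simpl; lra.
Qed.

Section ProfileSeries.

Variable c : nat -> R.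
Hypothesis Hc : profile_rec c.

Lemma ex_pseries_profile k x : ex_pseries (Nat.iter k PS_derive c) x.
Proof.
  apply CV_radius_inside.
  rewrite CV_radius_iter_PS_derive, profile_rec_CV_radius by exact Hc. exact I.
Qed.

Lemma is_derive_pseries_jet k x : is_derive (pseries_jet c k) x (pseries_jet c (S k) x).
Proof.
  apply is_derive_PSeries.
  rewrite CV_radius_iter_PS_derive, profile_rec_CV_radius by exact Hc. exact I.
Qed.

Lemma pseries_jet_ode x : pseries_jet c 4 x = (x * pseries_jet c 1 x - pseries_jet c 0 x) / 4.
Proof.
  unfold pseries_jet.
  rewrite <- PSeries_incr_1, <- PSeries_minus.
  2: apply ex_pseries_incr_1, (ex_pseries_profile 1).
  2: apply (ex_pseries_profile 0).
  unfold Rdiv. rewrite Rmult_comm, <- PSeries_scal.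
  apply PSeries_ext. intros n.
  unfold PS_scal, PS_minus, PS_incr_1. simpl.
  unfold scal, mult, plus, opp, zero; simpl. unfold mult; simpl.
  destruct n as [|n]; unfold PS_derive.
  - specialize (Hc 0%nat). simpl in Hc |- *. lra.
  - specialize (Hc (S n)).
    match type of Hc with ?L = _ => transitivity L; [ring | rewrite Hc; field] end.
Qed.

Lemma pseries_jet_solves D : profile_jet D (pseries_jet c).
Proof.
  apply profile_jet_intro; intros.
  - apply is_derive_pseries_jet.
  - apply pseries_jet_ode.
Qed.

End ProfileSeries.

(* The coefficient of [u ^ (4 k)] in [pFq(as; bs; u ^ 4 / 256)]. *)
Definition hyper_coeff (as_ bs : list R) (k : nat) : R :=
  fold_right Rmult 1 (map (fun a => pochhammer a k) as_)
  / fold_right Rmult 1 (map (fun b => pochhammer b k) bs)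
  / INR (Factorial.fact k) / 256 ^ k.

(* The coefficient sequence of [u ^ r * sum_k b k u ^ (4 k)], for [r < 4]. *)
Definition spread4 (r : nat) (b : nat -> R) (n : nat) : R :=
  if Nat.eqb (n mod 4) r then b (n / 4)%nat else 0.

Lemma hyper_term_coeff as_ bs u k :
  hyper_term as_ bs (u ^ 4 / 256) k = hyper_coeff as_ bs k * u ^ (4 * k).
Proof.
  unfold hyper_term, hyper_coeff. rewrite pow_mult. unfold Rdiv.
  rewrite Rpow_mult_distr, pow_inv. ring.
Qed.

Lemma spread4_at r b K j : (j < 4)%nat ->
  spread4 r b (4 * K + j) = if Nat.eqb j r then b K else 0.
Proof.
  intros Hj. unfold spread4.
  replace ((4 * K + j) mod 4)%nat with j by (apply (Nat.mod_unique _ _ K); lia).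
  replace ((4 * K + j) / 4)%nat with K by (apply (Nat.div_unique _ _ _ j); lia).
  reflexivity.
Qed.

Lemma sum_n_spread4 r b u : (r < 4)%nat -> forall K,
  sum_n (fun n => spread4 r b n * u ^ n) (4 * K + 3) = sum_n (fun k => b k * u ^ (4 * k + r)) K.
Proof.
  intros Hr K. induction K as [|K IH].
  - change (4 * 0 + 3)%nat with 3%nat. rewrite !sum_Sn, !sum_O.
    unfold plus, spread4; simpl.
    destruct r as [|[|[|[|r]]]]; simpl; try lia; ring.
  - replace (4 * S K + 3)%nat with (S (S (S (S (4 * K + 3))))) by lia.
    rewrite !sum_Sn, IH.
    replace (S (S (S (S (4 * K + 3))))) with (4 * S K + 3)%nat by lia.
    replace (S (S (S (4 * K + 3)))) with (4 * S K + 2)%nat by lia.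
    replace (S (S (4 * K + 3))) with (4 * S K + 1)%nat by lia.
    replace (S (4 * K + 3)) with (4 * S K + 0)%nat by lia.
    rewrite !spread4_at by lia. unfold plus; simpl.
    destruct r as [|[|[|[|r]]]]; simpl; try lia; ring.
Qed.

Lemma PSeries_spread4 r b u : (r < 4)%nat -> ex_pseries (spread4 r b) u ->
  PSeries (spread4 r b) u = u ^ r * Series (fun k => b k * u ^ (4 * k)).
Proof.
  intros Hr Hex.
  assert (Hs : is_series (fun n => spread4 r b n * u ^ n) (PSeries (spread4 r b) u))
    by (apply is_pseries_R, PSeries_correct, Hex).
  assert (Hb : is_series (fun k => b k * u ^ (4 * k + r)) (PSeries (spread4 r b) u)).
  { unfold is_series.
    apply (filterlim_ext (fun K => sum_n (fun n => spread4 r b n * u ^ n) (4 * K + 3))).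
    { intros K. apply sum_n_spread4, Hr. }
    apply (is_lim_seq_subseq _ (Finite _) (fun K => 4 * K + 3)%nat); [| exact Hs].
    apply eventually_subseq. intros; lia. }
  rewrite <- (is_series_unique _ _ Hb), <- Series_scal_l.
  apply Series_ext. intros k. rewrite pow_add. ring.
Qed.

Lemma hypergeom_pseries_jet as_ bs r u : (r < 4)%nat ->
  profile_rec (spread4 r (hyper_coeff as_ bs)) ->
  u ^ r * hypergeom as_ bs (u ^ 4 / 256) = pseries_jet (spread4 r (hyper_coeff as_ bs)) 0 u.
Proof.
  intros Hr Hc. unfold pseries_jet; simpl.
  rewrite PSeries_spread4 by (try exact Hr; exact (ex_pseries_profile _ Hc 0 u)).
  unfold hypergeom. f_equal. apply Series_ext. intros k. apply hyper_term_coeff.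
Qed.

Lemma pochhammer_pos b k : 0 < b -> 0 < pochhammer b k.
Proof.
  intros Hb. induction k as [|k IH]; simpl; [lra |].
  apply Rmult_lt_0_compat; [exact IH |]. pose proof (pos_INR k). lra.
Qed.

Lemma hyper_coeff_S a b1 b2 b3 K : 0 < b1 -> 0 < b2 -> 0 < b3 ->
  hyper_coeff [a] [b1; b2; b3] (S K) = hyper_coeff [a] [b1; b2; b3] K * (a + INR K)
    / ((b1 + INR K) * (b2 + INR K) * (b3 + INR K)) / INR (S K) / 256.
Proof.
  intros H1 H2 H3. unfold hyper_coeff. simpl map. simpl fold_right.
  change (pochhammer ?c (S K)) with (pochhammer c K * (c + INR K)).
  change (Factorial.fact (S K)) with (S K * Factorial.fact K)%nat.
  rewrite mult_INR. simpl pow.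
  pose proof (pochhammer_pos b1 K H1). pose proof (pochhammer_pos b2 K H2).
  pose proof (pochhammer_pos b3 K H3).
  pose proof (pos_INR K). pose proof (lt_0_INR _ (Factorial.lt_O_fact K)).
  assert (0 < 256 ^ K) by (apply pow_lt; lra).
  rewrite S_INR. field. repeat split; lra.
Qed.

(* The hypothesis is the recurrence at [n = 4 x + r], divided by the [x]-th
   hypergeometric coefficient. *)
Lemma profile_rec_hyper a b1 b2 b3 r : (r < 4)%nat -> 0 < b1 -> 0 < b2 -> 0 < b3 ->
  (forall x, 0 <= x ->
     (4 * x + INR r + 1) * (4 * x + INR r + 2) * (4 * x + INR r + 3) * (4 * x + INR r + 4)
       * ((a + x) / ((b1 + x) * (b2 + x) * (b3 + x)) / (x + 1) / 256)
     = (4 * x + INR r - 1) / 4) ->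
  profile_rec (spread4 r (hyper_coeff [a] [b1; b2; b3])).
Proof.
  intros Hr H1 H2 H3 Hid n.
  rewrite (Nat.div_mod n 4) by lia.
  pose proof (Nat.mod_upper_bound n 4 ltac:(lia)) as Hj.
  set (K := (n / 4)%nat) in *. set (j := (n mod 4)%nat) in *. clearbody K j.
  replace (S (S (S (S (4 * K + j))))) with (4 * S K + j)%nat by lia.
  rewrite !spread4_at by exact Hj.
  destruct (Nat.eqb j r) eqn:E; [| ring].
  apply Nat.eqb_eq in E. subst j.
  rewrite hyper_coeff_S by assumption.
  pose proof (pos_INR K) as HK. specialize (Hid (INR K) HK).
  repeat rewrite ?S_INR, ?plus_INR, ?mult_INR.
  change (INR 0) with 0.
  match type of Hid with ?L = _ => transitivity (L * hyper_coeff [a] [b1; b2; b3] K) end.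
  - field. repeat split; lra.
  - rewrite Hid. field.
Qed.

Definition z1_coeff : nat -> R := spread4 0 (hyper_coeff [-(1/4)] [1/4; 1/2; 3/4]).
Definition z3_coeff : nat -> R := spread4 2 (hyper_coeff [1/4] [3/4; 5/4; 3/2]).
Definition z4_coeff : nat -> R := spread4 3 (hyper_coeff [1/2] [5/4; 3/2; 7/4]).

Lemma z1_coeff_rec : profile_rec z1_coeff.
Proof.
  apply profile_rec_hyper; try lra; try lia.
  intros x Hx. simpl INR. field. repeat split; lra.
Qed.

Lemma z3_coeff_rec : profile_rec z3_coeff.
Proof.
  apply profile_rec_hyper; try lra; try lia.
  intros x Hx. simpl INR. field. repeat split; lra.
Qed.

Lemma z4_coeff_rec : profile_rec z4_coeff.
Proof.
  apply profile_rec_hyper; try lra; try lia.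
  intros x Hx. simpl INR. field. repeat split; lra.
Qed.

Lemma z1_pseries u : z1 u = pseries_jet z1_coeff 0 u.
Proof.
  unfold z1_coeff. rewrite <- (hypergeom_pseries_jet _ _ 0 u) by (lia || exact z1_coeff_rec).
  unfold z1. ring.
Qed.

Lemma z3_pseries u : z3 u = pseries_jet z3_coeff 0 u.
Proof.
  unfold z3_coeff. rewrite <- (hypergeom_pseries_jet _ _ 2 u) by (lia || exact z3_coeff_rec).
  reflexivity.
Qed.

Lemma z4_pseries u : z4 u = pseries_jet z4_coeff 0 u.
Proof.
  unfold z4_coeff. rewrite <- (hypergeom_pseries_jet _ _ 3 u) by (lia || exact z4_coeff_rec).
  reflexivity.
Qed.

Definition z2_jet (k : nat) : R -> R :=
  match k with 0%nat => z2 | 1%nat => fun _ => 1 | _ => fun _ => 0 end.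

Lemma z2_jet_solves D : profile_jet D z2_jet.
Proof.
  apply profile_jet_intro.
  - intros k x Hk _.
    destruct k as [|[|[|[|k]]]]; try lia; simpl; unfold z2; auto_derive; auto.
  - intros u _. simpl. unfold z2. field.
Qed.

Lemma wronskian_z_jets u :
  wronskian (pseries_jet z1_coeff) z2_jet (pseries_jet z3_coeff) (pseries_jet z4_coeff) u = 12.
Proof.
  transitivity
    (wronskian (pseries_jet z1_coeff) z2_jet (pseries_jet z3_coeff) (pseries_jet z4_coeff) 0).
  { eapply (wronskian_const _ _ _ (fun _ => True)); [| apply z2_jet_solves | | | trivial];
      apply pseries_jet_solves; auto using z1_coeff_rec, z3_coeff_rec, z4_coeff_rec. }
  unfold wronskian.
  destruct (pseries_jet_at_0 z1_coeff) as (-> & -> & -> & ->).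
  destruct (pseries_jet_at_0 z3_coeff) as (-> & -> & -> & ->).
  destruct (pseries_jet_at_0 z4_coeff) as (-> & -> & -> & ->).
  unfold z1_coeff, z3_coeff, z4_coeff, spread4, hyper_coeff, z2_jet, z2, det4, det3.
  simpl. field.
Qed.

Lemma halfline_locally pos x (P : R -> Prop) :
  halfline pos x -> (forall z, halfline pos z -> P z) -> locally x P.
Proof.
  intros Hx HP. destruct pos; simpl in Hx.
  - apply (locally_interval P x (Finite 0) p_infty); [exact Hx | exact I |].
    intros z Hz _. apply HP. exact Hz.
  - apply (locally_interval P x m_infty (Finite 0)); [exact I | exact Hx |].
    intros z _ Hz. apply HP. exact Hz.
Qed.

Lemma halfline_between pos a b x :
  halfline pos a -> halfline pos b -> Rmin a b <= x <= Rmax a b -> halfline pos x.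
Proof.
  destruct pos; simpl; intros Ha Hb Hx.
  - pose proof (Rmin_glb_lt a b 0 Ha Hb). lra.
  - pose proof (Rmax_lub_lt a b 0 Ha Hb). lra.
Qed.

Lemma halfline_div pos x s : 0 < s -> halfline pos x -> halfline pos (x / s).
Proof.
  intros Hs. destruct pos; simpl; intros Hx.
  - apply Rdiv_lt_0_compat; assumption.
  - apply Rmult_neg_pos; [exact Hx | apply Rinv_0_lt_compat, Hs].
Qed.

Lemma is_derive_self_similar B (Z : R -> R) x : 0 < B -> ex_derive Z x ->
  is_derive (fun s => Rpower (B * s) (1 / 4) * Z (x / Rpower (B * s) (1 / 4)))
    (/ B) (B / 4 * (Z x - x * Derive Z x)).
Proof.
  intros HB HZ. unfold Rpower.
  assert (Hunit : exp (1 / 4 * ln (B * / B)) = 1)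
    by (rewrite Rinv_r, ln_1, Rmult_0_r, exp_0 by lra; reflexivity).
  auto_derive; rewrite Hunit, Rinv_1, Rmult_1_r, Rinv_r by lra.
  - repeat split; auto; lra.
  - change (Derive (fun u => Z u)) with (Derive Z).
    rewrite !Rmult_1_r, Rinv_1. field.
Qed.

Lemma self_similar_profile_jet B pos y Z : 0 < B -> is_solution B pos y ->
  (forall t x, 0 < t -> halfline pos x ->
     y t x = Rpower (B * t) (1 / 4) * Z (x / Rpower (B * t) (1 / 4))) ->
  profile_jet (halfline pos) (fun k => Derive_n Z k).
Proof.
  intros HB Hsol Hy.
  set (t0 := / B).
  assert (Ht0 : 0 < t0) by (apply Rinv_0_lt_compat, HB).
  assert (Hy0 : forall z, halfline pos z -> y t0 z = Z z).
  { intros z Hz. rewrite Hy by assumption. unfold t0, Rpower.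
    rewrite Rinv_r, ln_1, Rmult_0_r, exp_0 by lra. rewrite Rdiv_1_r. apply Rmult_1_l. }
  assert (Hjet : forall k x, halfline pos x -> Derive_n (y t0) k x = Derive_n Z k x).
  { intros k x Hx. apply Derive_n_ext_loc, (halfline_locally pos x); assumption. }
  assert (Hd : forall k x, (k < 4)%nat -> halfline pos x ->
             is_derive (Derive_n Z k) x (Derive_n Z (S k) x)).
  { intros k x Hk Hx. apply Derive_correct.
    destruct (Hsol t0 x Ht0 Hx) as (_ & Hex & _).
    apply (ex_derive_ext_loc (Derive_n (y t0) k)); [| exact (Hex k Hk)].
    apply (halfline_locally pos x); [exact Hx |]. intros z Hz. apply Hjet, Hz. }
  apply profile_jet_intro; [exact Hd |].
  intros x Hx.
  destruct (Hsol t0 x Ht0 Hx) as (_ & _ & Hpde).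
  assert (Hdt : Derive (fun s => y s x) t0 = B / 4 * (Z x - x * Derive Z x)).
  { apply is_derive_unique.
    apply (is_derive_ext_loc (fun s => Rpower (B * s) (1 / 4) * Z (x / Rpower (B * s) (1 / 4)))).
    - apply (locally_interval _ t0 (Finite 0) p_infty Ht0 I).
      intros s Hs _. symmetry. apply Hy; assumption.
    - apply is_derive_self_similar; [exact HB |].
      exists (Derive_n Z 1 x). exact (Hd 0%nat x ltac:(lia) Hx). }
  rewrite Hdt, Hjet in Hpde by exact Hx.
  change (Derive_n Z 0 x) with (Z x). change (Derive_n Z 1 x) with (Derive Z x).
  apply (Rmult_eq_reg_l B); lra.
Qed.

Theorem theorem2 (B : R) (pos : bool) (y : R -> R -> R) (Z : R -> R) :
  0 < B ->
  is_solution B pos y ->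
  (forall t x, 0 < t -> halfline pos x ->
     y t x = Rpower (B * t) (1/4) * Z (x / Rpower (B * t) (1/4))) ->
  exists C1 C2 C3 C4 : R,
    forall t x, 0 < t -> halfline pos x ->
      y t x = Rpower (B * t) (1/4) *
        (C1 * z1 (x / Rpower (B * t) (1/4)) + C2 * z2 (x / Rpower (B * t) (1/4))
       + C3 * z3 (x / Rpower (B * t) (1/4)) + C4 * z4 (x / Rpower (B * t) (1/4))).
Proof.
  intros HB Hsol Hy.
  set (u0 := if pos then 1 else -1).
  assert (Hu0 : halfline pos u0) by (unfold u0; destruct pos; simpl; lra).
  assert (HW : wronskian (pseries_jet z1_coeff) z2_jet (pseries_jet z3_coeff)
                 (pseries_jet z4_coeff) u0 <> 0) by (rewrite wronskian_z_jets; lra).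
  destruct (jet_solves_span _ _ _ _ _ _ _ _ _ _ (halfline_between pos) Hu0 HW
              (self_similar_profile_jet B pos y Z HB Hsol Hy)
              (pseries_jet_solves _ z1_coeff_rec _) (z2_jet_solves _)
              (pseries_jet_solves _ z3_coeff_rec _) (pseries_jet_solves _ z4_coeff_rec _))
    as (C1 & C2 & C3 & C4 & HZ).
  exists C1, C2, C3, C4. intros t x Ht Hx.
  assert (Hs : 0 < Rpower (B * t) (1 / 4)) by apply exp_pos.
  rewrite Hy, z1_pseries, z3_pseries, z4_pseries by assumption.
  f_equal. apply HZ, halfline_div; assumption.
Qed.
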